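(* Let $\sigma=\langle\mathcal V,\mathcal C,S,B\rangle$ be an approval-based multi-winner election, let $\mathcal A\subseteq\mathcal C$ be non-empty, and let $F\in\mathfrak F^{\mathrm{opt}}_{\sigma,\mathcal A}$. If $c^*\in\mathcal A$ satisfies $\mathrm{Supp}_F(c^* )>\mathrm{maxMin}(\sigma,\mathcal A)$, then $$\mathrm{maxMin}(\sigma,\mathcal A)=\mathrm{maxMin}(\sigma,\mathcal A\setminus\{c^*\}).$$
   Context: An approval-based multi-winner election is a tuple $\sigma=\langle \mathcal V,\mathcal C,S,B\rangle$, where $\mathcal V$ is a finite set of agents, $\mathcal C$ is a finite set of candidates, $1\le S\le|\mathcal C|$ is an integer, and $B:2^{\mathcal C}\to\mathbb N$ gives, for each $\mathcal A\subseteq\mathcal C$, the number $B(\mathcal A)$ of agents whose ballot is exactly $\mathcal A$ (with $\sum_{\mathcal A}B(\mathcal A)\le|\mathcal V|$). For a non-empty $\mathcal A\subseteq\mathcal C$, the family $\mathfrak F_{\sigma,\mathcal A}$ is the set of all $F:2^{\mathcal C}\times\mathcal A\to\mathbb R$ such that: - $F(y,c)\ge0$ for all $y$ and $c$; - $F(y,c)=0$ if $c\notin y$; - $\sum_{c\in\mathcal A\cap y}F(y,c)=B(y)$ whenever $y\cap\mathcal A\neq\emptyset$. We write $\mathrm{Supp}_F(c)=\sum_yF(y,c)$ and $\mathrm{maxMin}(\sigma,\mathcal A)=\sup_{F\in\mathfrak F_{\sigma,\mathcal A}}\min_{c\in\mathcal A}\mathrm{Supp}_F(c)$. We also write $\mathfrak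 F^{\mathrm{opt}}_{\sigma,\mathcal A}=\{F\in\mathfrak F_{\sigma,\mathcal A}:\mathrm{Supp}_F(c)\ge\mathrm{maxMin}(\sigma,\mathcal A)\ \forall c\in\mathcal A\}$. *)

From HB Require Import structures.
From mathcomp Require Import all_boot all_order all_algebra.
Set Implicit Arguments. Unset Strict Implicit. Unset Printing Implicit Defensive.
Import Order.TTheory GRing.Theory Num.Theory.
Local Open Scope ring_scope.

(* Candidates: a finite type C.  Ballots: B : {set C} -> nat.
   A flow F : {set C} -> C -> R; only its values on candidates c \in A matter
   (the paper's domain is 2^C x A). *)

Definition in_family (R : realFieldType) (C : finType) (B : {set C} -> nat)
    (A : {set C}) (F : {set C} -> C -> R) : Prop :=
  (forall (y : {set C}) c, c \in A -> 0 <= F y c) /\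
  (forall (y : {set C}) c, c \in A -> c \notin y -> F y c = 0) /\
  (forall y : {set C}, y :&: A != set0 -> \sum_(c in A :&: y) F y c = (B y)%:R).

Definition Supp (R : realFieldType) (C : finType) (F : {set C} -> C -> R) (c : C) : R :=
  \sum_(y : {set C}) F y c.

Definition is_min_on (R : realFieldType) (C : finType) (A : {set C}) (f : C -> R) (v : R) : Prop :=
  (exists2 c, c \in A & v = f c) /\ (forall c, c \in A -> v <= f c).

Definition is_maxMin (R : realFieldType) (C : finType) (B : {set C} -> nat)
    (A : {set C}) (m : R) : Prop :=
  (forall F v, in_family B A F -> is_min_on A (Supp F) v -> v <= m) /\
  (forall u, (forall F v, in_family B A F -> is_min_on A (Supp F) v -> v <= u) -> m <= u).

Definition in_opt_family (R : realFieldType) (C : finType) (B : {set C} -> nat)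
    (A : {set C}) (m : R) (F : {set C} -> C -> R) : Prop :=
  in_family B A F /\ (forall c, c \in A -> m <= Supp F c).

(* For the
   upper bound, a flow G for A \ {a} whose minimum exceeds maxMin is extended
   to A by letting [a] absorb exactly the ballots that approve no other member
   of A; a small convex combination with the optimal F then keeps [a] above
   maxMin (thanks to the slack Supp F a > maxMin) and lifts every other
   candidate strictly above it, contradicting the definition of maxMin.  For
   the lower bound, redirecting the support that F gives [a] to some other
   approved member of A \ {a} yields a flow for A \ {a} whose minimum is at
   least maxMin. *)

From HB Require Import structures.
From mathcomp Require Import all_boot all_order all_algebra ring lra.
Set Implicit Arguments. Unset Strict Implicit. Unset Printing Implicit Defensive.
Import Order.TTheory GRing.Theory Num.Theory.
Local Open Scope ring_scope.

Section MaxMin.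

Variables (R : realFieldType) (C : finType) (B : {set C} -> nat).
Implicit Types (A y : {set C}) (F G : {set C} -> C -> R).

Lemma is_min_on_exists A (f : C -> R) : A != set0 -> exists v, is_min_on A f v.
Proof.
case/set0Pn=> c0 Ac0; have [c Ac cmin] := arg_minP f Ac0.
by exists (f c); split; [exists c | move=> d /cmin].
Qed.

Lemma Supp_ge0 A F c : in_family B A F -> c \in A -> 0 <= Supp F c.
Proof. by move=> [F_ge0 _] Ac; apply: sumr_ge0 => y _; apply: F_ge0. Qed.

Lemma is_maxMin_Supp_le A m F :
  is_maxMin B A m -> in_family B A F -> A != set0 ->
  exists2 c, c \in A & Supp F c <= m.
Proof.
move=> [m_ub _] famF /(is_min_on_exists (Supp F))[v minv].
have [[c Ac vE] _] := minv; exists c => //.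
by rewrite -vE; apply: m_ub famF minv.
Qed.

Definition mix_flow (t : R) F G y c := (1 - t) * F y c + t * G y c.

Lemma Supp_mix t F G c : Supp (mix_flow t F G) c = (1 - t) * Supp F c + t * Supp G c.
Proof. by rewrite /Supp big_split /= -!mulr_sumr. Qed.

Lemma in_family_mix A t F G :
  0 <= t <= 1 -> in_family B A F -> in_family B A G -> in_family B A (mix_flow t F G).
Proof.
move=> /andP[t_ge0 t_le1] [F_ge0 [F_out F_sum]] [G_ge0 [G_out G_sum]].
split; [|split] => [y c Ac | y c Ac yNc | y yA].
- by apply: addr_ge0; apply: mulr_ge0; rewrite ?subr_ge0 ?F_ge0 ?G_ge0.
- by rewrite /mix_flow F_out // G_out // !mulr0 addr0.
- by rewrite big_split /= -!mulr_sumr F_sum // G_sum //; ring.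
Qed.

Lemma mix_weight (m s : R) : m < s -> 0 <= s -> exists2 t, 0 < t < 1 & m < (1 - t) * s.
Proof.
move=> lt_ms s_ge0; have [m_lt0 | m_ge0] := ltP m 0.
  by exists (1 / 2); [apply/andP; split | ]; lra.
have s_gt0 : 0 < s by lra.
exists ((s - m) / (2 * s)).
  by apply/andP; split; [apply: divr_gt0 | rewrite ltr_pdivrMr]; lra.
have -> : (1 - (s - m) / (2 * s)) * s = (s + m) / 2 by field; lra.
lra.
Qed.

Lemma sum_setU1I (f : C -> R) A y a : a \notin A ->
  \sum_(c in (a |: A) :&: y) f c =
    (if a \in y then f a else 0) + \sum_(c in A :&: y) f c.
Proof.
move=> aNA; rewrite setIUl; case: ifP => ay.
  by rewrite (setIidPl _) ?sub1set // big_setU1 //= inE (negbTE aNA).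
rewrite (_ : [set a] :&: y = set0) ?set0U ?add0r //.
by apply/setP=> c; rewrite !inE; case: eqP => // ->.
Qed.

Variables (a : C) (A : {set C}).
Hypothesis aNA : a \notin A.

Definition extend_flow G y c : R :=
  if c == a then (if (a \in y) && (A :&: y == set0) then (B y)%:R else 0) else G y c.

Lemma in_family_extend G : in_family B A G -> in_family B (a |: A) (extend_flow G).
Proof.
move=> [G_ge0 [G_out G_sum]].
split; [|split] => [y c | y c | y yA].
- by rewrite /extend_flow in_setU1; case: eqP => [_ _ | _ /= /G_ge0 //]; case: ifP.
- rewrite /extend_flow in_setU1; case: eqP => [-> _ /negbTE -> // | _ /= Ac].
  exact: G_out.
rewrite sum_setU1I // /extend_flow eqxx.
rewrite (eq_bigr (G y)) => [|c /setIP[Ac _]]; last first.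
  by case: eqP Ac => // ->; rewrite (negbTE aNA).
case: (boolP (A :&: y == set0)) => [/eqP Ay0 | Ay]; last first.
  by rewrite andbF if_same add0r G_sum // setIC.
have ay : a \in y.
  case/set0Pn: yA => c /setIP[yc]; rewrite in_setU1 => /predU1P[<- // | Ac].
  by move/setP: Ay0 => /(_ c); rewrite !inE Ac yc.
by rewrite Ay0 big_set0 ay /= addr0.
Qed.

Lemma Supp_extend G c : c != a -> Supp (extend_flow G) c = Supp G c.
Proof. by move=> ca; apply: eq_bigr => y _; rewrite /extend_flow (negbTE ca). Qed.

(* When [y] approves no member of [A], [a] is the default and keeps its share. *)
Definition redirect_flow F y c : R :=
  F y c + (if c == odflt a [pick x in A :&: y] then F y a else 0).

Lemma in_family_redirect F : in_family B (a |: A) F -> in_family B A (redirect_flow F).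
Proof.
move=> [F_ge0 [F_out F_sum]]; rewrite /redirect_flow.
split; [|split] => [y c Ac | y c Ac yNc | y yA].
- by apply: addr_ge0; [|case: ifP => // _]; apply: F_ge0; rewrite ?setU11 ?setU1r.
- rewrite F_out ?setU1r // add0r; case: pickP => [x /setIP[_ xy] | _] /=.
    by case: eqP => // cx; rewrite cx xy in yNc.
  by case: eqP => // ca; case/negP: aNA; rewrite -ca.
case: pickP => [p /setIP[Ap py] | noA]; last first.
  by case/set0Pn: yA => c /setIP[yc Ac]; have := noA c; rewrite inE Ac yc.
rewrite big_split /= [X in _ + X](big_setD1 p) ?inE ?Ap ?py //= eqxx.
rewrite [X in _ + (_ + X)]big1 ?addr0 => [|c /setD1P[/negbTE -> //]].
rewrite -(F_sum y) ?sum_setU1I //; last by rewrite setIUr setU_eq0 negb_and yA orbT.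
by rewrite addrC; case: ifP => // ay; rewrite F_out ?setU11 ?ay.
Qed.

Lemma Supp_redirect_ge F c :
  in_family B (a |: A) F -> c \in A -> Supp F c <= Supp (redirect_flow F) c.
Proof.
move=> [F_ge0 _] Ac; apply: ler_sum => y _; rewrite lerDl.
by case: ifP => // _; apply: F_ge0; rewrite setU11.
Qed.

Section Optimal.

Variables (m : R) (F : {set C} -> C -> R).
Hypotheses (hm : is_maxMin B (a |: A) m) (hF : in_opt_family B (a |: A) m F).

Lemma maxMin_setU1_ub G v :
  m < Supp F a -> in_family B A G -> is_min_on A (Supp G) v -> v <= m.
Proof.
move=> slack famG [_ v_le]; rewrite leNgt; apply/negP => lt_mv.
have [famF F_ge] := hF.
have [t /andP[t_gt0 t_lt1] lt_m_mix] := mix_weight slack (Supp_ge0 famF (setU11 a A)).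
have t01 : 0 <= t <= 1 by rewrite !ltW.
have famH := in_family_mix t01 famF (in_family_extend famG).
have aA0 : a |: A != set0 by apply/set0Pn; exists a; rewrite setU11.
have [c cA] := is_maxMin_Supp_le hm famH aA0.
apply/negP; rewrite -ltNge Supp_mix.
case: (eqVneq c a) => [-> | ca].
  have := mulr_ge0 (ltW t_gt0) (Supp_ge0 (in_family_extend famG) (setU11 a A)).
  lra.
move: cA; rewrite in_setU1 (negbTE ca) /= => Ac.
rewrite Supp_extend //.
have := F_ge c (setU1r a Ac); have := v_le c Ac; nra.
Qed.

Lemma maxMin_setU1_least u :
  A != set0 -> (forall G v, in_family B A G -> is_min_on A (Supp G) v -> v <= u) -> m <= u.
Proof.
move=> A0 u_ub; have [famF F_ge] := hF.
have [w minw] := is_min_on_exists (Supp (redirect_flow F)) A0.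
apply: le_trans (u_ub _ _ (in_family_redirect famF) minw).
have [[c Ac ->] _] := minw.
exact: le_trans (F_ge c (setU1r a Ac)) (Supp_redirect_ge famF Ac).
Qed.

End Optimal.

End MaxMin.

Theorem lemma4 (R : realFieldType) (C : finType) (nV S : nat) (B : {set C} -> nat)
    (hS : (1 <= S <= #|C|)%N)
    (hB : (\sum_(y : {set C}) B y <= nV)%N)
    (A : {set C}) (hA : A != set0)
    (m : R) (hm : is_maxMin B A m)
    (F : {set C} -> C -> R) (hF : in_opt_family B A m F)
    (cs : C) (hcs : cs \in A) (hsupp : m < Supp F cs) :
  is_maxMin B (A :\ cs) m.
Proof.
set A' := A :\ cs.
have csNA' : cs \notin A' by rewrite setD11.
have A'0 : A' != set0.
  have [c Ac Fc_le] := is_maxMin_Supp_le hm (proj1 hF) hA.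
  apply/set0Pn; exists c; rewrite in_setD1 Ac andbT.
  by apply: contraTneq Fc_le => ->; rewrite -ltNge.
rewrite -(setD1K hcs) -/A' in hm hF.
split=> [G v | u].
  exact: (maxMin_setU1_ub (B := B) csNA' hm hF hsupp).
exact: (maxMin_setU1_least (B := B) csNA' hF A'0).
Qed.
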